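(* Let $F$ be a commutative field, $n\ge 3$, let $K$ be a linear complex of planes in $\mathrm{PG}(n,F)$ having no singular line, let $H$ be a hyperplane of $\mathrm{PG}(n,F)$ and let $\mathcal F_H$ be the set of all lines whose polar hyperplane is $H$ (a line spread of $H$). Put $M=(n^2+n-2)/2$. Then $\mathcal F_H$ is linear; more precisely, $\mathcal F_H^{\wp_{n,1}}=R\cap\mathcal G_{n,1}$ for some $(M-n)$-subspace $R$ of $\mathrm{PG}(M,F)$. Furthermore, if $F$ is quadratically closed or $F$ is finite, then $\mathcal F_H$ is not geometric.
   Context: A linear complex of planes of $\mathrm{PG}(n,F)$ is the set of planes whose Plücker image ($F(v_0\wedge v_1\wedge v_2)$) lies in a fixed hyperplane of $\mathbb P(\bigwedge^3F^{n+1})$. A line is singular for $K$ if every plane through it is in $K$; for a non-singular line $\ell$ the polar hyperplane is the unique hyperplane $E$ such that a plane through $\ell$ is in $K$ iff it lies in $E$. $\wp_{n,1}$ is the Plücker embedding of lines of $\mathrm{PG}(n,F)$ into $\mathrm{PG}(M,F)=\mathbb P(\bigwedge^2F^{n+1})$, $\ell=\langle v_0,v_1\rangle\mapsto F(v_0\wedge v_1)$, with image the Grassmann variety $\mathcal G_{n,1}$. A line spread of a projective space is a set of lines such that each point lies on exactly one of them; a line spread $\mathcal F$ is linear if $\mathcal F^{\wp_{n,1}}$ is the intersection of $\mathcal G_{n,1}$ with a subspace of $\mathrm{PG}(M,F)$; it is geometric if for any two distinct lines $\ell,m\in\mathcal F$ the lines of $\mathcal F$ contained in the solid $\ell\vee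 m$ form a line spread of $\ell\vee m$. *)

From HB Require Import structures.
From mathcomp Require Import all_boot all_order all_algebra.
Set Implicit Arguments. Unset Strict Implicit. Unset Printing Implicit Defensive.
Import GRing.Theory.
Local Open Scope ring_scope.

(* PG(n,F) = projective space of F^(n+1) = 'rV[F]_n.+1.
   A subspace of PG(n,F) is represented by a square matrix (its row space). *)

(* Index set of Pluecker coordinates of lines: pairs i < j. *)
Notation pidx n := {p : 'I_n.+1 * 'I_n.+1 | (p.1 < p.2)%N}.
(* Index set of Pluecker coordinates of planes: triples i < j < k. *)
Notation tidx n :=
  {t : 'I_n.+1 * 'I_n.+1 * 'I_n.+1 | (t.1.1 < t.1.2)%N && (t.1.2 < t.2)%N}.

(* Pluecker coordinates of u /\ v (a vector of bigwedge^2 F^(n+1)). *)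
Definition plk (F : fieldType) (n : nat) (u v : 'rV[F]_n.+1)
  : 'rV[F]_#|{: pidx n}| :=
  \row_k (let p : pidx n := enum_val k in
          u 0 (val p).1 * v 0 (val p).2 - u 0 (val p).2 * v 0 (val p).1).

(* Pluecker coordinate of u /\ v /\ w at index t = (a,b,c): 3x3 minor. *)
Definition minor3 (F : fieldType) (n : nat) (u v w : 'rV[F]_n.+1) (t : tidx n) : F :=
  let a := (val t).1.1 in let b := (val t).1.2 in let c := (val t).2 in
  u 0 a * (v 0 b * w 0 c - v 0 c * w 0 b)
  - u 0 b * (v 0 a * w 0 c - v 0 c * w 0 a)
  + u 0 c * (v 0 a * w 0 b - v 0 b * w 0 a).

Definition is_point (F : fieldType) (n : nat) (X : 'M[F]_n.+1) := \rank X = 1%N.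
Definition is_line (F : fieldType) (n : nat) (X : 'M[F]_n.+1) := \rank X = 2%N.
Definition is_plane (F : fieldType) (n : nat) (X : 'M[F]_n.+1) := \rank X = 3%N.
Definition is_hyperplane (F : fieldType) (n : nat) (X : 'M[F]_n.+1) := \rank X = n.

(* The linear complex of planes K_c determined by the hyperplane of
   P(bigwedge^3 F^(n+1)) with coordinate vector c (c <> 0):
   a plane P = <u,v,w> is in K_c iff sum_t c_t [u/\v/\w]_t = 0. *)
Definition in_complex (F : fieldType) (n : nat) (c : {ffun tidx n -> F})
    (P : 'M[F]_n.+1) : Prop :=
  is_plane P /\
  forall u v w : 'rV[F]_n.+1, (col_mx u (col_mx v w) == P)%MS ->
    \sum_t c t * minor3 u v w t = 0.

Definition singular_line (F : fieldType) (n : nat) (c : {ffun tidx n -> F})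
    (L : 'M[F]_n.+1) : Prop :=
  forall P : 'M[F]_n.+1, is_plane P -> (L <= P)%MS -> in_complex c P.

Definition is_polar (F : fieldType) (n : nat) (c : {ffun tidx n -> F})
    (L E : 'M[F]_n.+1) : Prop :=
  is_hyperplane E /\
  forall P : 'M[F]_n.+1, is_plane P -> (L <= P)%MS ->
    (in_complex c P <-> (P <= E)%MS).

Definition polar_spread (F : fieldType) (n : nat) (c : {ffun tidx n -> F})
    (H L : 'M[F]_n.+1) : Prop :=
  is_line L /\ ~ singular_line c L /\ is_polar c L H.

Definition line_spread_of (F : fieldType) (n : nat) (S : 'M[F]_n.+1 -> Prop)
    (X : 'M[F]_n.+1) : Prop :=
  (forall L, S L -> is_line L /\ (L <= X)%MS) /\
  (forall p : 'M[F]_n.+1, is_point p -> (p <= X)%MS ->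
     exists L, [/\ S L, (p <= L)%MS &
       forall L', S L' -> (p <= L')%MS -> (L' == L)%MS]).

Definition geometric (F : fieldType) (n : nat) (S : 'M[F]_n.+1 -> Prop) : Prop :=
  forall L1 L2, S L1 -> S L2 -> ~~ (L1 == L2)%MS ->
    line_spread_of (fun L => S L /\ (L <= L1 + L2)%MS) (L1 + L2)%MS.

(* M = (n^2+n-2)/2, so that PG(M,F) = P(bigwedge^2 F^(n+1)). *)
Definition Mdim (n : nat) : nat := ((n * n + n - 2) %/ 2)%N.

Definition quad_closed (F : fieldType) : Prop := forall a : F, exists b, b * b = a.
Definition finite_field (F : fieldType) : Prop := exists s : seq F, forall x, x \in s.

From HB Require Import structures.
From mathcomp Require Import all_boot all_order all_algebra.
From mathcomp Require Import ring zify.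
Set Implicit Arguments. Unset Strict Implicit. Unset Printing Implicit Defensive.
Import GRing.Theory.
Local Open Scope ring_scope.

(* The complex is the zero set of the alternating trilinear form
   [cform c u v w = sum_t c_t [u/\v/\w]_t].  With no singular line, the linear
   form [cform c u v _] of a line [<u,v>] is non-zero and its kernel is the polar
   hyperplane, so [<u,v>] lies in [F_H] iff [cform c u v] vanishes on [H].  As
   [cform c u v z] is linear in the Pluecker vector [u/\v], this is a system of [n]
   linear equations in that vector, of full rank because no [z <> 0] can make
   [cform c _ _ z] vanish identically.
   If [F_H] were geometric, take two of its lines [<a1,b1>] and [<a2,b2>]; the spread
   lines through [a1 + a2] and [a1 + b2] inside the solid they span yield, by
   linearity, a family of pairs [(x,y)] depending on [(u,s,t)] whose form vanishes
   on [H].  At a point off [H] this is a ternary quadratic form in [(u,s,t)], which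
   is isotropic over a finite or quadratically closed field; the isotropic vector
   gives either a singular line or two distinct spread lines through a point. *)

Section RowSpans.
Variables (F : fieldType) (m : nat).
Implicit Types u v w x : 'rV[F]_m.

Lemma rV_linear_expand (g : 'rV[F]_m -> F) :
  (forall a x y, g (a *: x + y) = a * g x + g y) ->
  forall w, g w = \sum_j w 0 j * g (delta_mx 0 j).
Proof.
move=> g_lin w; have g0 : g 0 = 0.
  have := g_lin 1 0 0; rewrite scaler0 addr0 mul1r => g00.
  by apply: (addrI (g 0)); rewrite addr0 -g00.
rewrite {1}(row_sum_delta w); elim/big_rec2: _ => [|j x y _ <-] //; exact: g_lin.
Qed.

Lemma col_mxSl m1 m2 (A : 'M[F]_(m1, m)) (B : 'M[F]_(m2, m)) : (A <= col_mx A B)%MS.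
Proof. by rewrite -addsmxE addsmxSl. Qed.

Lemma col_mxSr m1 m2 (A : 'M[F]_(m1, m)) (B : 'M[F]_(m2, m)) : (B <= col_mx A B)%MS.
Proof. by rewrite -addsmxE addsmxSr. Qed.

Lemma span2_sub_span3 u v w : (col_mx u v <= col_mx u (col_mx v w))%MS.
Proof.
by rewrite col_mx_sub col_mxSl (submx_trans (col_mxSl v w)) ?col_mxSr.
Qed.

Lemma mul_mx11 (A : 'M[F]_1) x : A *m x = A 0 0 *: x.
Proof. by rewrite {1}[A]mx11_scalar mul_scalar_mx. Qed.

Lemma sub_span2P x u v :
  reflect (exists a b, x = a *: u + b *: v) (x <= col_mx u v)%MS.
Proof.
apply: (iffP idP) => [/submxP[D ->] | [a [b ->]]].
  by rewrite -[D]hsubmxK mul_row_col !mul_mx11; do 2!eexists.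
by rewrite addmx_sub ?scalemx_sub ?col_mxSl ?col_mxSr.
Qed.

Lemma sub_span3 x u v w : (x <= col_mx u (col_mx v w))%MS ->
  exists a1 a2 a3, x = a1 *: u + a2 *: v + a3 *: w.
Proof.
case/submxP=> D ->; rewrite -[D]hsubmxK mul_row_col -[rsubmx D]hsubmxK.
by rewrite mul_row_col !mul_mx11 addrA; do 3!eexists.
Qed.

Lemma span2_free u v a b : \rank (col_mx u v) = 2%N ->
  a *: u + b *: v = 0 -> a = 0 /\ b = 0.
Proof.
move=> r2 uv0; have : row_mx a%:M b%:M *m col_mx u v = 0.
  by rewrite mul_row_col !mul_scalar_mx.
move/eqP; rewrite mulmx_free_eq0 /row_free ?r2 // => /eqP/rowP h.
by have := h (lshift 1 0); have := h (rshift 1 0); rewrite row_mxEl row_mxEr !mxE.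
Qed.

Lemma span2_dep u v : \rank (col_mx u v) != 2%N ->
  exists a b, ((a != 0) || (b != 0)) /\ a *: u + b *: v = 0.
Proof.
move=> r2; have /rowV0Pn[r] : kermx (col_mx u v) != 0 by rewrite kermx_eq0.
rewrite sub_kermx -[r]hsubmxK mul_row_col !mul_mx11 => /eqP uv0 nz_r.
exists (lsubmx r 0 0), (rsubmx r 0 0); split=> //; apply: contraNT nz_r.
rewrite negb_or !negbK => /andP[/eqP r1 /eqP r2']; apply/eqP/rowP => j.
by rewrite !mxE; case: splitP => k _; rewrite (ord1 k) ?r1 ?r2'.
Qed.

Lemma rank_le_submx m1 m2 (A : 'M[F]_(m1, m)) (B : 'M[F]_(m2, m)) :
  (A <= B)%MS -> (\rank B <= \rank A)%N -> (B <= A)%MS.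
Proof.
by move=> sAB le_BA; rewrite -(mxrank_leqif_sup sAB).2 eqn_leq le_BA mxrankS.
Qed.

Lemma exists_rV_notin m1 m2 (A : 'M[F]_(m1, m)) (B : 'M[F]_(m2, m)) :
  (\rank B < \rank A)%N -> exists2 x : 'rV[F]_m, (x <= A)%MS & ~~ (x <= B)%MS.
Proof.
move=> lt_BA; have /row_subPn[i nAB] : ~~ (A <= B)%MS.
  by apply: contraTN lt_BA => /mxrankS; rewrite leqNgt.
by exists (row i A); rewrite ?row_sub.
Qed.

Lemma rank_col_mx_notin m1 (A : 'M[F]_(m1, m)) x : ~~ (x <= A)%MS ->
  \rank (col_mx A x) = (\rank A).+1.
Proof.
move=> nxA; have nz_x : x != 0 by apply: contraNneq nxA => ->; rewrite sub0mx.
have cap0 : \rank (A :&: x)%MS = 0%N.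
  apply/eqP; apply: contraNT nxA; rewrite -lt0n => pos.
  apply: submx_trans (capmxSl A x); apply: rank_le_submx (capmxSr A x) _.
  by rewrite rank_rV nz_x.
by have := mxrank_sum_cap A x; rewrite cap0 rank_rV nz_x -addsmxE addn1 addn0.
Qed.

Lemma full_annihilator_eq0 m1 p (A : 'M[F]_(m1, m)) x (g : 'M[F]_(m, p)) :
  \rank (col_mx A x) = m -> A *m g = 0 -> x *m g = 0 -> g = 0.
Proof.
move=> full Ag xg; apply: (@row_full_inj _ _ _ _ (col_mx A x)); first exact/eqP.
by rewrite mul_col_mx Ag xg col_mx0 mulmx0.
Qed.

End RowSpans.

Section ComplexForm.
Variables (F : fieldType) (n : nat) (c : {ffun tidx n -> F}).
Local Notation V := 'rV[F]_n.+1.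
Implicit Types u v w x y z : V.

Definition cform u v w : F := \sum_t c t * minor3 u v w t.

Lemma cform_linear1 a u u' v w :
  cform (a *: u + u') v w = a * cform u v w + cform u' v w.
Proof.
by rewrite /cform mulr_sumr -big_split /=; apply: eq_bigr => t _; rewrite /minor3 !mxE; ring.
Qed.

Lemma cform_linear2 a u v v' w :
  cform u (a *: v + v') w = a * cform u v w + cform u v' w.
Proof.
by rewrite /cform mulr_sumr -big_split /=; apply: eq_bigr => t _; rewrite /minor3 !mxE; ring.
Qed.

Lemma cform_linear3 a u v w w' :
  cform u v (a *: w + w') = a * cform u v w + cform u v w'.
Proof.
by rewrite /cform mulr_sumr -big_split /=; apply: eq_bigr => t _; rewrite /minor3 !mxE; ring.
Qed.

Lemma cformD1 u u' v w : cform (u + u') v w = cform u v w + cform u' v w.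
Proof. by rewrite -{1}[u]scale1r cform_linear1 mul1r. Qed.
Lemma cformD2 u v v' w : cform u (v + v') w = cform u v w + cform u v' w.
Proof. by rewrite -{1}[v]scale1r cform_linear2 mul1r. Qed.
Lemma cformD3 u v w w' : cform u v (w + w') = cform u v w + cform u v w'.
Proof. by rewrite -{1}[w]scale1r cform_linear3 mul1r. Qed.

Lemma cformZ1 a u v w : cform (a *: u) v w = a * cform u v w.
Proof.
by rewrite /cform mulr_sumr; apply: eq_bigr => t _; rewrite /minor3 !mxE; ring.
Qed.
Lemma cformZ2 a u v w : cform u (a *: v) w = a * cform u v w.
Proof.
by rewrite /cform mulr_sumr; apply: eq_bigr => t _; rewrite /minor3 !mxE; ring.
Qed.
Lemma cformZ3 a u v w : cform u v (a *: w) = a * cform u v w.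
Proof.
by rewrite /cform mulr_sumr; apply: eq_bigr => t _; rewrite /minor3 !mxE; ring.
Qed.

Definition cformE := (cformD1, cformD2, cformD3, cformZ1, cformZ2, cformZ3).

Lemma cform_id12 u w : cform u u w = 0.
Proof. by rewrite /cform big1 // => t _; rewrite /minor3; ring. Qed.
Lemma cform_id13 u v : cform u v u = 0.
Proof. by rewrite /cform big1 // => t _; rewrite /minor3; ring. Qed.
Lemma cform_id23 u v : cform u v v = 0.
Proof. by rewrite /cform big1 // => t _; rewrite /minor3; ring. Qed.

Lemma cformN12 u v w : cform v u w = - cform u v w.
Proof. by rewrite /cform -sumrN; apply: eq_bigr => t _; rewrite /minor3; ring. Qed.

Lemma cform_rot u v w : cform v w u = cform u v w.
Proof. by rewrite /cform; apply: eq_bigr => t _; rewrite /minor3; ring. Qed.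

Lemma cform_span2 u v a b : cform u v (a *: u + b *: v) = 0.
Proof. by rewrite !cformE cform_id13 cform_id23 !mulr0 addr0. Qed.

Lemma cform_span3 u v w a1 a2 a3 b1 b2 b3 c1 c2 c3 :
  cform (a1 *: u + a2 *: v + a3 *: w) (b1 *: u + b2 *: v + b3 *: w)
        (c1 *: u + c2 *: v + c3 *: w) =
  (a1 * (b2 * c3 - b3 * c2) - a2 * (b1 * c3 - b3 * c1) + a3 * (b1 * c2 - b2 * c1))
  * cform u v w.
Proof.
by rewrite /cform mulr_sumr; apply: eq_bigr => t _; rewrite /minor3 !mxE; ring.
Qed.

Definition polar_col u v : 'cV[F]_n.+1 := \col_j cform u v (delta_mx 0 j).

Lemma cform_polar_col u v z : cform u v z = (z *m polar_col u v) 0 0.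
Proof.
rewrite (@rV_linear_expand _ _ (cform u v)) => [|*]; last exact: cform_linear3.
by rewrite mxE; apply: eq_bigr => j _; rewrite mxE.
Qed.

Lemma cform_sum_delta2 u v z : cform u v z = \sum_j v 0 j * cform u (delta_mx 0 j) z.
Proof.
by rewrite (@rV_linear_expand _ _ (cform u ^~ z)) // => a x y; apply: cform_linear2.
Qed.

Lemma mul_polar_colE p (X : 'M[F]_(p, n.+1)) u v i :
  (X *m polar_col u v) i 0 = cform u v (row i X).
Proof. by rewrite cform_polar_col -row_mul [RHS]mxE. Qed.

Lemma mul_polar_col_eq0 p (X : 'M[F]_(p, n.+1)) u v :
  X *m polar_col u v = 0 <-> forall z, (z <= X)%MS -> cform u v z = 0.
Proof.
split=> [X0 z /submxP[D ->] | X0].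
  by rewrite cform_polar_col -mulmxA X0 mulmx0 mxE.
by apply/matrixP=> i j; rewrite (ord1 j) [RHS]mxE mul_polar_colE X0 ?row_sub.
Qed.

Lemma rank_span3 u v w : \rank (col_mx u v) = 2%N -> ~~ (w <= col_mx u v)%MS ->
  \rank (col_mx u (col_mx v w)) = 3%N.
Proof.
move=> r2 nw; rewrite -[3%N]/(2.+1)%N -r2 -(rank_col_mx_notin nw).
apply/eqmx_rank/andP; split; last first.
  by rewrite col_mx_sub span2_sub_span3 (submx_trans (col_mxSr v w)) ?col_mxSr.
rewrite !col_mx_sub col_mxSr andbT.
by rewrite (submx_trans (col_mxSl u v)) ?(submx_trans (col_mxSr u v)) ?col_mxSl.
Qed.

Lemma plane_through_line u v (P : 'M[F]_n.+1) : \rank (col_mx u v) = 2%N ->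
  is_plane P -> (col_mx u v <= P)%MS -> exists w, (col_mx u (col_mx v w) == P)%MS.
Proof.
move=> r2 rP; rewrite col_mx_sub => /andP[uP vP].
have [|w wP nw] := exists_rV_notin (A := P) (B := col_mx u v); first by rewrite rP r2.
exists w; apply/andP; split; first by rewrite !col_mx_sub uP vP wP.
by apply: rank_le_submx; rewrite ?col_mx_sub ?uP ?vP ?wP // rP rank_span3.
Qed.

Lemma in_complex_span3 u v w (P : 'M[F]_n.+1) : (col_mx u (col_mx v w) == P)%MS ->
  in_complex c P <-> is_plane P /\ cform u v w = 0.
Proof.
move=> eT; split=> [[rP uvw0] | [rP uvw0]]; first by split; last exact: uvw0 _ _ _ eT.
split=> // u' v' w' /andP[sT' _]; case/andP: eT => _ sPT.
move: (submx_trans sT' sPT); rewrite !col_mx_sub => /and3P[/sub_span3 [a1 [a2 [a3 ->]]]].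
move=> /sub_span3 [b1 [b2 [b3 ->]]] /sub_span3 [c1 [c2 [c3 ->]]].
by have := cform_span3 u v w a1 a2 a3 b1 b2 b3 c1 c2 c3; rewrite uvw0 mulr0.
Qed.

End ComplexForm.

Section PolarSpread.
Variables (F : fieldType) (n : nat) (c : {ffun tidx n -> F}) (H : 'M[F]_n.+1).
Hypothesis n_ge3 : (3 <= n)%N.
Hypothesis no_singular : forall L : 'M[F]_n.+1, is_line L -> ~ singular_line c L.
Hypothesis rankH : \rank H = n.
Local Notation V := 'rV[F]_n.+1.
Local Notation cform := (cform c).
Local Notation polar_col := (polar_col c).
Implicit Types u v w x y z : V.

Lemma polar_spread_eqmx (L L' : 'M[F]_n.+1) :
  (L == L')%MS -> polar_spread c H L -> polar_spread c H L'.
Proof.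
move/eqmxP=> eqLL' [rL [nsL [rH polarL]]]; split; first by rewrite /is_line -eqLL'.
split; first by move=> sL'; apply: nsL => P rP; rewrite eqLL'; apply: sL'.
by split=> // P rP; rewrite -eqLL'; apply: polarL.
Qed.

Lemma polar_col_neq0 u v : \rank (col_mx u v) = 2%N -> polar_col u v != 0.
Proof.
move=> r2; apply/eqP=> uv0; apply: (@no_singular <<col_mx u v>>%MS).
  by rewrite /is_line genmxE.
move=> P rP; rewrite genmxE => sLP; have [w eT] := plane_through_line r2 rP sLP.
by apply/(in_complex_span3 c eT); rewrite cform_polar_col uv0 mulmx0 mxE.
Qed.

Lemma polar_hyperplaneE u v x : \rank (col_mx u v) = 2%N ->
  H *m polar_col u v = 0 -> (x <= H)%MS = (cform u v x == 0).
Proof.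
move=> r2 Huv0; apply/idP/eqP => [|uvx0]; first exact: (mul_polar_col_eq0 c H u v).1.
apply: contraTT (polar_col_neq0 r2) => nxH; rewrite negbK; apply/eqP.
apply: (full_annihilator_eq0 (x := x) _ Huv0).
  by rewrite rank_col_mx_notin ?rankH.
by apply/rowP=> j; rewrite (ord1 j) -cform_polar_col uvx0 mxE.
Qed.

Lemma polar_spreadP u v : \rank (col_mx u v) = 2%N ->
  polar_spread c H <<col_mx u v>>%MS <-> H *m polar_col u v = 0.
Proof.
move=> r2; split=> [[_ [_ [_ polar]]] | Huv0].
  have polarW w : ~~ (w <= col_mx u v)%MS ->
      cform u v w = 0 <-> (col_mx u (col_mx v w) <= H)%MS.
    move=> nw; have eT : (col_mx u (col_mx v w) == <<col_mx u (col_mx v w)>>)%MS.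
      exact/eqmxP/eqmx_sym/genmxE.
    have rP : is_plane <<col_mx u (col_mx v w)>>%MS by rewrite /is_plane genmxE rank_span3.
    have sLP : (<<col_mx u v>> <= <<col_mx u (col_mx v w)>>)%MS.
      by rewrite !genmxE span2_sub_span3.
    rewrite -(genmxE (col_mx u (col_mx v w))) -(polar _ rP sLP) (in_complex_span3 c eT).
    by split=> [|[]].
  have [|x x0 nx] := exists_rV_notin (A := kermx (polar_col u v)) (B := col_mx u v).
    by rewrite mxrank_ker r2; have := rank_leq_col (polar_col u v); lia.
  have /(polarW _ nx) : cform u v x = 0.
    by move: x0; rewrite sub_kermx cform_polar_col => /eqP ->; rewrite mxE.
  rewrite !col_mx_sub => /and3P[uH vH _].
  apply/(mul_polar_col_eq0 c H u v) => z zH.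
  have [/sub_span2P[a [b ->]] | nz] := boolP (z <= col_mx u v)%MS.
    exact: cform_span2.
  by apply/polarW; rewrite ?col_mx_sub ?uH ?vH.
have uH : (u <= H)%MS by rewrite (polar_hyperplaneE _ r2 Huv0) cform_id13.
have vH : (v <= H)%MS by rewrite (polar_hyperplaneE _ r2 Huv0) cform_id23.
split; first by rewrite /is_line genmxE.
split; first by apply: no_singular; rewrite /is_line genmxE.
split=> // P rP; rewrite genmxE => sLP; have [w eT] := plane_through_line r2 rP sLP.
have wP : (w <= P)%MS.
  by apply: submx_trans (proj1 (andP eT)); rewrite (submx_trans (col_mxSr v w)) ?col_mxSr.
rewrite (in_complex_span3 c eT); split=> [[_ /eqP wH] | sPH].
  apply: submx_trans (proj2 (andP eT)) _.
  by rewrite !col_mx_sub uH vH (polar_hyperplaneE _ r2 Huv0).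
by split=> //; apply/eqP; rewrite -(polar_hyperplaneE _ r2 Huv0) (submx_trans wP).
Qed.

Lemma polar_spread_span (L : 'M[F]_n.+1) x y : polar_spread c H L ->
  (x <= L)%MS -> (y <= L)%MS -> \rank (col_mx x y) = 2%N -> H *m polar_col x y = 0.
Proof.
move=> PSL xL yL r2; apply/(polar_spreadP r2)/(polar_spread_eqmx _ PSL).
have rL : \rank L = 2%N by case: PSL.
have sxyL : (col_mx x y <= L)%MS by rewrite col_mx_sub xL yL.
by apply/andP; rewrite !genmxE sxyL (rank_le_submx sxyL) // rL r2.
Qed.

End PolarSpread.

Lemma sum_ltn_pairs k : (\sum_(i < k) \sum_(j < k) ((i < j)%N : nat) = 'C(k, 2))%N.
Proof.
elim: k => [|k IHk]; first by rewrite big_ord0.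
rewrite big_ord_recr /=; under eq_bigr do rewrite big_ord_recr /= ltn_ord.
rewrite big_split /= IHk sum1_card card_ord big1 => [|j _]; last first.
  by rewrite ltnNge -ltnS ltn_ord.
by rewrite binS bin1 addn0 addnC.
Qed.

Lemma card_pidx n : #|{: pidx n}| = 'C(n.+1, 2).
Proof.
rewrite card_sig -sum1_card big_mkcond /= -sum_ltn_pairs pair_big /=.
by apply: eq_bigr => p _; rewrite inE; case: ifP.
Qed.

Lemma bin2S_mul2 n : ('C(n.+1, 2) * 2 = n.+1 * n)%N.
Proof. by rewrite bin_ffact ffactnS ffactn1. Qed.

Lemma Mdim_bin2 n : Mdim n = ('C(n.+1, 2)).-1.
Proof.
rewrite /Mdim (_ : n * n + n - 2 = ('C(n.+1, 2)).-1 * 2)%N ?mulnK //.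
by rewrite -subn1 mulnBl bin2S_mul2; lia.
Qed.

Section Plucker.
Variables (F : fieldType) (n : nat) (c : {ffun tidx n -> F}).
Local Notation V := 'rV[F]_n.+1.
Local Notation N := #|{: pidx n}|.

Definition pair12 (t : tidx n) : pidx n :=
  exist _ ((val t).1.1, (val t).1.2) (proj1 (andP (valP t))).
Definition pair23 (t : tidx n) : pidx n :=
  exist _ ((val t).1.2, (val t).2) (proj2 (andP (valP t))).
Definition pair13 (t : tidx n) : pidx n :=
  exist _ ((val t).1.1, (val t).2)
    (ltn_trans (proj1 (andP (valP t))) (proj2 (andP (valP t)))).

Definition pcoord (p : 'rV[F]_N) (q : pidx n) : F := p 0 (enum_rank q).

(* Laplace expansion of [minor3 u v z t] along its last row, with the 2x2 minors
   of [u] and [v] replaced by the coordinates of an arbitrary [p]. *)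
Definition plucker_form (p : 'rV[F]_N) (z : V) : F :=
  \sum_t c t * (pcoord p (pair12 t) * z 0 (val t).2
                - pcoord p (pair13 t) * z 0 (val t).1.2
                + pcoord p (pair23 t) * z 0 (val t).1.1).

Lemma pcoord_plk (u v : V) q :
  pcoord (plk u v) q = u 0 (val q).1 * v 0 (val q).2 - u 0 (val q).2 * v 0 (val q).1.
Proof. by rewrite /pcoord mxE enum_rankK. Qed.

Lemma cform_plucker (u v z : V) : cform c u v z = plucker_form (plk u v) z.
Proof. by apply: eq_bigr => t _; rewrite !pcoord_plk /minor3; ring. Qed.

Lemma plucker_form_linear a p p' z :
  plucker_form (a *: p + p') z = a * plucker_form p z + plucker_form p' z.
Proof.
rewrite /plucker_form mulr_sumr -big_split /=.
by apply: eq_bigr => t _; rewrite /pcoord !mxE; ring.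
Qed.

Definition plucker_mx : 'M[F]_(N, n.+1) :=
  \matrix_(k, j) plucker_form (delta_mx 0 k) (delta_mx 0 j).

Lemma plk_mul_plucker_mx (u v : V) : plk u v *m plucker_mx = (polar_col c u v)^T.
Proof.
apply/rowP=> j; rewrite [RHS]mxE [RHS]mxE cform_plucker.
rewrite (@rV_linear_expand _ _ (plucker_form^~ _)) => [|a p p']; last first.
  exact: plucker_form_linear.
by rewrite mxE; apply: eq_bigr => k _; rewrite [plucker_mx _ _]mxE.
Qed.

End Plucker.

Section PluckerRank.
Variables (F : fieldType) (n : nat) (c : {ffun tidx n -> F}) (H : 'M[F]_n.+1).
Hypothesis n_ge3 : (3 <= n)%N.
Hypothesis no_singular : forall L : 'M[F]_n.+1, is_line L -> ~ singular_line c L.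
Hypothesis rankH : \rank H = n.

(* A vector [z] killed by the transposed matrix would make [cform c x y z]
   vanish identically, and then the line through [z] would be singular. *)
Lemma plucker_mx_tr_free : row_free (plucker_mx c)^T.
Proof.
apply/inj_row_free => z z0; apply/eqP/negPn/negP => nz.
have formz x y : cform c x y z = 0.
  rewrite cform_polar_col -[polar_col c x y]trmxK -plk_mul_plucker_mx.
  by rewrite trmx_mul mulmxA z0 mul0mx mxE.
have [|e _ nze] := exists_rV_notin (A := 1%:M : 'M[F]_n.+1) (B := z).
  by rewrite mxrank1 rank_rV nz ltnS (leq_trans _ n_ge3).
have rze : \rank (col_mx z e) = 2%N by rewrite rank_col_mx_notin // rank_rV nz.
move/negP: (polar_col_neq0 no_singular rze); apply.
apply/eqP; rewrite -[polar_col c z e]mul1mx.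
by apply/(mul_polar_col_eq0 c 1%:M) => y _; rewrite -cform_rot formz.
Qed.

Lemma polar_spread_linear : exists R : 'M[F]_#|{: pidx n}|,
  \rank R = (Mdim n - n).+1 /\
  forall u v : 'rV[F]_n.+1, \rank (col_mx u v) = 2%N ->
    (polar_spread c H <<col_mx u v>>%MS <-> (plk u v <= R)%MS).
Proof.
exists (kermx (plucker_mx c *m H^T)); split.
  rewrite mxrank_ker -mxrank_tr trmx_mul trmxK mxrankMfree ?plucker_mx_tr_free //.
  by rewrite rankH card_pidx Mdim_bin2; have := bin2S_mul2 n; nia.
move=> u v r2; rewrite (polar_spreadP n_ge3 no_singular rankH r2) sub_kermx mulmxA.
by rewrite plk_mul_plucker_mx -trmx_mul trmx_eq0; split=> /eqP.
Qed.

End PluckerRank.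

Section FiniteFieldCounting.
Variables (F : fieldType) (s : seq F).
Hypotheses (s_uniq : uniq s) (s_all : forall x, x \in s).

Lemma finite_inj_surj (g : F -> F) : injective g -> forall y, exists x, g x = y.
Proof.
move=> g_inj y; have /uniq_min_size : uniq (map g s) by rewrite map_inj_uniq.
case/(_ s (fun x _ => s_all x)); first by rewrite size_map.
by move=> _ /(_ y); rewrite s_all => /mapP[x _ ->]; exists x.
Qed.

Variable g : F -> F.
Hypothesis g_fiber : forall x y, g x = g y -> y = x \/ y = - x.

Lemma count_fiber_le2 v : (count (fun x => g x == v) s <= 2)%N.
Proof.
have [/hasP[x0 _ /eqP gx0] | ] := boolP (has (fun x => g x == v) s); last first.
  by rewrite has_count lt0n negbK => /eqP ->.
apply: leq_trans (sub_count (a2 := predU (pred1 x0) (pred1 (- x0))) _ _) _.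
  by move=> y /eqP; rewrite -gx0 => /esym/g_fiber[] ->; rewrite /= eqxx ?orbT.
by have := count_predUI (pred1 x0) (pred1 (- x0)) s; rewrite !count_uniq_mem ?s_all; lia.
Qed.

Lemma count_fiber0 : (count (fun x => g x == g 0) s <= 1)%N.
Proof.
apply: leq_trans (sub_count (a2 := pred1 0) _ _) _; last by rewrite count_uniq_mem ?s_all.
by move=> y /eqP/esym/g_fiber[] ->; rewrite /= ?oppr0 eqxx.
Qed.

(* Each fibre has at most two points and the fibre of [g 0] only one, so more
   than half of the field is needed to cover it with fibres. *)
Lemma size_image_gt : (size s < 2 * size (undup (map g s)))%N.
Proof.
set I := undup (map g s).
have g0I : g 0 \in I by rewrite mem_undup map_f.
have sizeE : size s = (\sum_(v <- I) count (fun x => g x == v) s)%N.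
  rewrite -(size_map g) -(perm_size (perm_count_undup (map g s))) size_flatten.
  rewrite /shape -map_comp sumnE big_map; apply: eq_bigr => v _.
  by rewrite /= size_nseq count_map; apply: eq_count => x; rewrite /= eq_sym.
have le2 : (\sum_(v <- rem (g 0) I) count (fun x => g x == v) s <= 2 * size (rem (g 0) I))%N.
  rewrite [X in (_ <= X)%N](_ : _ = \sum_(v <- rem (g 0) I) 2)%N.
    by apply: leq_sum => v _; apply: count_fiber_le2.
  by rewrite big_const_seq count_predT iter_addn_0.
rewrite sizeE (perm_big _ (perm_to_rem g0I)) big_cons.
apply: leq_ltn_trans (leq_add count_fiber0 le2) _.
rewrite size_rem //; have : (0 < size I)%N by case: (I) g0I.
lia.
Qed.

End FiniteFieldCounting.

Section TernaryForms.
Variable F : fieldType.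
Hypothesis F_closed_or_finite : quad_closed F \/ finite_field F.

Lemma finite_field_enum : finite_field F -> exists2 s : seq F, uniq s & forall x, x \in s.
Proof. by case=> s s_all; exists (undup s) => [|x]; rewrite ?undup_uniq ?mem_undup. Qed.

Lemma sqrt_char2 : (2 : F) = 0 -> forall a : F, exists b, b * b = a.
Proof.
move=> char2; case: F_closed_or_finite => [// | /finite_field_enum[s s_uniq s_all]].
apply: (finite_inj_surj s_uniq s_all) => x y /= xy.
have : (x - y) * (x - y) = 0.
  transitivity (x * x - y * y + 2 * (y * y - x * y)); first by ring.
  by rewrite xy char2 subrr mul0r addr0.
by move/eqP; rewrite mulf_eq0 orbb subr_eq0 => /eqP.
Qed.

Lemma binary_diag_onto (a b d : F) : 2 != 0 :> F -> a != 0 -> b != 0 ->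
  exists X Y, a * X * X + b * Y * Y = d.
Proof.
move=> two_nz a_nz b_nz; case: F_closed_or_finite => [closedF | ].
  have [X sqX] := closedF (d / a); exists X, 0.
  by rewrite !mulr0 addr0 -mulrA sqX mulrC divfK.
case/finite_field_enum=> s s_uniq s_all.
have sq_fiber (k x y : F) : k != 0 -> k * x * x = k * y * y -> y = x \/ y = - x.
  move=> k_nz /eqP; rewrite -subr_eq0 -!mulrA -mulrBr mulf_eq0 (negbTE k_nz) /=.
  rewrite (_ : x * x - y * y = (x - y) * (x + y)); last by ring.
  by rewrite mulf_eq0 subr_eq0 addr_eq0 => /orP[] /eqP ->; [left | right; rewrite opprK].
set gA : F -> F := fun X => a * X * X; set gB : F -> F := fun Y => d - b * Y * Y.
have fibA x y : gA x = gA y -> y = x \/ y = - x by exact: sq_fiber.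
have fibB x y : gB x = gB y -> y = x \/ y = - x.
  by move/addrI/oppr_inj; exact: sq_fiber.
have /hasP[v] : has (mem (undup (map gA s))) (undup (map gB s)).
  apply/negPn/negP => disjAB.
  have : (size (undup (map gA s)) + size (undup (map gB s)) <= size s)%N.
    rewrite -size_cat; apply: uniq_leq_size => [|x _]; last exact: s_all.
    by rewrite cat_uniq !undup_uniq disjAB.
  by have := size_image_gt s_uniq s_all fibA; have := size_image_gt s_uniq s_all fibB; lia.
rewrite /= !mem_undup => /mapP[Y _ ->] /mapP[X _ eAB].
by exists X, Y; move: eAB; rewrite /gA /gB => <-; ring.
Qed.

Definition quad3 (A B C D E G u s t : F) :=
  A * u * u + B * u * s + C * u * t + D * s * s + E * s * t + G * t * t.

Definition nonzero3 (u s t : F) := ~~ [&& u == 0, s == 0 & t == 0].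

Lemma quad3_isotropic_char2 A B C D E G : (2 : F) = 0 ->
  exists u s t, nonzero3 u s t /\ quad3 A B C D E G u s t = 0.
Proof.
move=> char2; have sqrtF := sqrt_char2 char2.
have twice0 (x : F) : x + x = 0 by rewrite -mulr2n -mulr_natl char2 mul0r.
have [A0 | A_nz] := eqVneq A 0.
  by exists 1, 0, 0; split; rewrite /nonzero3 ?oner_eq0 // /quad3 A0; ring.
have [/andP[/eqP B0 /eqP C0] | BC_nz] := boolP ((B == 0) && (C == 0)).
  have [l sql] := sqrtF (D / A); exists l, 1, 0; split; first by rewrite /nonzero3 oner_eq0 andbF.
  rewrite (_ : quad3 _ _ _ _ _ _ _ _ _ = A * (l * l) + D); last by rewrite /quad3 B0; ring.
  by rewrite sql mulrC divfK // twice0.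
have [Q0 | Q_nz] := eqVneq (quad3 A B C D E G 0 C B) 0.
  by exists 0, C, B; split; rewrite // /nonzero3 eqxx /= andbC.
(* On [(1, l C, l B)] the form is [A + l^2 q(0, C, B)] in characteristic 2. *)
have [l sql] := sqrtF (A / quad3 A B C D E G 0 C B).
exists 1, (l * C), (l * B); split; first by rewrite /nonzero3 oner_eq0.
rewrite (_ : quad3 _ _ _ _ _ _ _ _ _ = A + 2 * (l * B * C) + l * l * quad3 A B C D E G 0 C B).
  by rewrite sql divfK // char2 mul0r addr0 twice0.
by rewrite /quad3; ring.
Qed.

Lemma quad3_isotropic_odd A B C D E G : 2 != 0 :> F ->
  exists u s t, nonzero3 u s t /\ quad3 A B C D E G u s t = 0.
Proof.
move=> two_nz; have four_nz : 4 != 0 :> F by rewrite (_ : 4 = 2 * 2) ?mulf_neq0 //; ring.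
have [A0 | A_nz] := eqVneq A 0.
  by exists 1, 0, 0; split; rewrite /nonzero3 ?oner_eq0 // /quad3 A0; ring.
(* Complete the square in [u], then in [s]. *)
set D' := D - B * B / (4 * A); set E' := E - B * C / (2 * A).
set G' := G - C * C / (4 * A).
have [D'0 | D'_nz] := eqVneq D' 0.
  exists (- B / (2 * A)), 1, 0; split; first by rewrite /nonzero3 oner_eq0 andbF.
  rewrite -{}[RHS]D'0 /D' /quad3; field; by rewrite A_nz four_nz two_nz.
set G'' := G' - E' * E' / (4 * D').
have [X [Y XY]] := binary_diag_onto (- G'') two_nz A_nz D'_nz.
set s := Y - E' / (2 * D').
exists (X - (B * s + C) / (2 * A)), s, 1; split; first by rewrite /nonzero3 oner_eq0 !andbF.
suff -> : quad3 A B C D E G (X - (B * s + C) / (2 * A)) s 1 = A * X * X + D' * Y * Y + G''.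
  by rewrite XY addNr.
have D'E : D * (4 * A) - B * B = D' * (4 * A) by rewrite /D'; field; rewrite A_nz four_nz.
rewrite /quad3 /G'' /G' /s /E' /D'; field.
by rewrite A_nz four_nz two_nz D'E mulf_neq0 // mulf_neq0.
Qed.

Lemma quad3_isotropic A B C D E G :
  exists u s t, nonzero3 u s t /\ quad3 A B C D E G u s t = 0.
Proof.
have [char2 | two_nz] := eqVneq (2 : F) 0.
  exact: quad3_isotropic_char2.
exact: quad3_isotropic_odd.
Qed.

End TernaryForms.

Section NotGeometric.
Variables (F : fieldType) (n : nat) (c : {ffun tidx n -> F}) (H : 'M[F]_n.+1).
Hypothesis n_ge3 : (3 <= n)%N.
Hypothesis no_singular : forall L : 'M[F]_n.+1, is_line L -> ~ singular_line c L.
Hypothesis rankH : \rank H = n.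
Local Notation V := 'rV[F]_n.+1.
Local Notation cform := (cform c).
Local Notation polar_col := (polar_col c).
Local Notation PS := (polar_spread c H).

(* The map [v |-> (cform p v h)_(h row of H)] has [p] in the kernel of its
   transpose, hence rank at most [n - 1], so its kernel contains some [v]
   independent of [p]. *)
Lemma exists_polar_line (p : V) : p != 0 -> (p <= H)%MS ->
  exists v : V, \rank (col_mx p v) = 2%N /\ H *m polar_col p v = 0.
Proof.
move=> p_nz pH; set M : 'M[F]_n.+1 := \matrix_(j, i) cform p (delta_mx 0 i) (delta_mx 0 j).
have HME (k i : 'I_n.+1) : (H *m M) k i = cform p (delta_mx 0 i) (row k H).
  rewrite mxE [RHS]cform_polar_col mxE; apply: eq_bigr => j _; rewrite !mxE.
  by rewrite mulrC.
have pM0 : p *m M = 0.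
  apply/rowP=> i; rewrite !mxE -[RHS](cform_id13 c p (delta_mx 0 i)) cform_polar_col mxE.
  by apply: eq_bigr => j _; rewrite !mxE.
set Q := (H *m M)^T.
have vQE (v : V) k : (v *m Q) 0 k = cform p v (row k H).
  by rewrite mxE cform_sum_delta2; apply: eq_bigr => i _; rewrite mxE HME.
have rankQ : (\rank Q <= n.-1)%N.
  rewrite mxrank_tr; have := mxrank_mul_ker H M; rewrite rankH.
  have : (p <= H :&: kermx M)%MS by rewrite sub_capmx pH sub_kermx pM0 eqxx.
  by move/mxrankS; rewrite rank_rV p_nz; lia.
have [|v vK nv] := exists_rV_notin (A := kermx Q) (B := p).
  by rewrite mxrank_ker rank_rV p_nz; lia.
exists v; split; first by rewrite rank_col_mx_notin // rank_rV p_nz.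
move: vK; rewrite sub_kermx => /eqP vQ0.
by apply/matrixP=> k l; rewrite (ord1 l) mul_polar_colE -vQE vQ0 !mxE.
Qed.

Section TwoSpreadLines.
Variables a1 b1 a2 b2 : V.
Hypotheses (rank1 : \rank (col_mx a1 b1) = 2%N) (rank2 : \rank (col_mx a2 b2) = 2%N).
Hypotheses (polar1 : H *m polar_col a1 b1 = 0) (polar2 : H *m polar_col a2 b2 = 0).
Local Notation L1 := <<col_mx a1 b1>>%MS.
Local Notation L2 := <<col_mx a2 b2>>%MS.
Local Notation X := (L1 + L2)%MS.
Hypothesis L1_neq_L2 : ~~ (L1 == L2)%MS.
Hypothesis spread_X : line_spread_of (fun L => PS L /\ (L <= X)%MS) X.

Let PS1 : PS L1. Proof. exact/(polar_spreadP n_ge3 no_singular rankH rank1). Qed.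
Let PS2 : PS L2. Proof. exact/(polar_spreadP n_ge3 no_singular rankH rank2). Qed.
Let L1X : (L1 <= X)%MS. Proof. exact: addsmxSl. Qed.
Let L2X : (L2 <= X)%MS. Proof. exact: addsmxSr. Qed.

Lemma spread_lines_meet_eq (L L' : 'M[F]_n.+1) (x : V) : PS L -> PS L' ->
  (L <= X)%MS -> (L' <= X)%MS -> x != 0 -> (x <= L)%MS -> (x <= L')%MS -> (L == L')%MS.
Proof.
move=> PSL PSL' LX L'X x_nz xL xL'.
have pt_x : is_point <<x>>%MS by rewrite /is_point genmxE rank_rV x_nz.
have xX : (<<x>> <= X)%MS by rewrite genmxE (submx_trans xL LX).
have [L0 [_ _ uniqL0]] := spread_X.2 _ pt_x xX.
rewrite -genmxE in xL; rewrite -genmxE in xL'.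
have /eqmxP eqL := uniqL0 L (conj PSL LX) xL.
have /eqmxP eqL' := uniqL0 L' (conj PSL' L'X) xL'.
exact/eqmxP/(eqmx_trans eqL)/eqmx_sym.
Qed.

Definition comb4 (s1 s2 s3 s4 : F) : V := s1 *: a1 + s2 *: b1 + s3 *: a2 + s4 *: b2.

Lemma sub_L1 (y : V) : (y <= L1)%MS -> exists s1 s2, y = comb4 s1 s2 0 0.
Proof.
rewrite genmxE => /sub_span2P[s1 [s2 ->]].
by exists s1, s2; rewrite /comb4 !scale0r !addr0.
Qed.

Lemma sub_L2 (y : V) : (y <= L2)%MS -> exists s3 s4, y = comb4 0 0 s3 s4.
Proof.
rewrite genmxE => /sub_span2P[s3 [s4 ->]].
by exists s3, s4; rewrite /comb4 !scale0r !add0r.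
Qed.

Lemma comb4_sub s1 s2 s3 s4 : (comb4 s1 s2 s3 s4 <= X)%MS.
Proof.
rewrite /comb4 -addrA addmx_sub //; [apply: submx_trans L1X | apply: submx_trans L2X];
  by rewrite genmxE; apply/sub_span2P; do 2!eexists.
Qed.

Lemma comb4_eq0 s1 s2 s3 s4 : comb4 s1 s2 s3 s4 = 0 ->
  [/\ s1 = 0, s2 = 0, s3 = 0 & s4 = 0].
Proof.
rewrite /comb4 -addrA; set y := s1 *: a1 + s2 *: b1 => yz0.
have [y0 | y_nz] := eqVneq y 0.
  have [-> ->] := span2_free rank1 y0.
  by move: yz0; rewrite y0 add0r => /(span2_free rank2)[-> ->].
case/negP: L1_neq_L2; apply: (spread_lines_meet_eq PS1 PS2 L1X L2X y_nz).
  by rewrite genmxE; apply/sub_span2P; do 2!eexists.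
rewrite genmxE; apply/sub_span2P; exists (- s3), (- s4).
by rewrite !scaleNr -opprD; apply/eqP; rewrite -addr_eq0 yz0.
Qed.

Lemma comb4_lin k1 k2 s1 s2 s3 s4 t1 t2 t3 t4 :
  k1 *: comb4 s1 s2 s3 s4 + k2 *: comb4 t1 t2 t3 t4 =
  comb4 (k1 * s1 + k2 * t1) (k1 * s2 + k2 * t2) (k1 * s3 + k2 * t3) (k1 * s4 + k2 * t4).
Proof. by apply/rowP => j; rewrite !mxE; ring. Qed.

Lemma cform_comb4 s1 s2 s3 s4 t1 t2 t3 t4 z :
  cform (comb4 s1 s2 s3 s4) (comb4 t1 t2 t3 t4) z =
    (s1 * t2 - s2 * t1) * cform a1 b1 z + (s1 * t3 - s3 * t1) * cform a1 a2 z
  + (s1 * t4 - s4 * t1) * cform a1 b2 z + (s2 * t3 - s3 * t2) * cform b1 a2 z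
  + (s2 * t4 - s4 * t2) * cform b1 b2 z + (s3 * t4 - s4 * t3) * cform a2 b2 z.
Proof.
rewrite /comb4 !cformE !cform_id12 (cformN12 c a1 b1) (cformN12 c a1 a2).
by rewrite (cformN12 c a1 b2) (cformN12 c b1 a2) (cformN12 c b1 b2) (cformN12 c a2 b2); ring.
Qed.

Lemma comb4_inj s1 s2 s3 s4 t1 t2 t3 t4 : comb4 s1 s2 s3 s4 = comb4 t1 t2 t3 t4 ->
  [/\ s1 = t1, s2 = t2, s3 = t3 & s4 = t4].
Proof.
move=> eq_st; have := comb4_lin 1 (-1) s1 s2 s3 s4 t1 t2 t3 t4.
rewrite eq_st scale1r scaleN1r addrN => /esym/comb4_eq0.
by rewrite !mul1r !mulN1r => -[/subr0_eq -> /subr0_eq -> /subr0_eq -> /subr0_eq ->].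
Qed.

Lemma comb4_sub_L1 s1 s2 s3 s4 : (comb4 s1 s2 s3 s4 <= L1)%MS -> s3 = 0 /\ s4 = 0.
Proof. by case/sub_L1=> t1 [t2 /comb4_inj[_ _ -> ->]]. Qed.

Lemma comb4_sub_L2 s1 s2 s3 s4 : (comb4 s1 s2 s3 s4 <= L2)%MS -> s1 = 0 /\ s2 = 0.
Proof. by case/sub_L2=> t3 [t4 /comb4_inj[-> -> _ _]]. Qed.

Lemma rank_comb4_unit s3 s4 t3 t4 :
  \rank (col_mx (comb4 1 0 s3 s4) (comb4 0 1 t3 t4)) = 2%N.
Proof.
apply/eqP; apply: contraT => /span2_dep[k1 [k2 [k_nz]]].
rewrite comb4_lin !mulr0 !mulr1 addr0 add0r => /comb4_eq0[k10 k20 _ _].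
by rewrite k10 k20 eqxx in k_nz.
Qed.

(* The spread line [l] through [a1 + w3 a2 + w4 b2] misses [L2], so [l + L2 = X]
   and [b1] splits as a vector of [l] plus a vector of [L2]. *)
Lemma spread_line_through w3 w4 :
  exists g3 g4, H *m polar_col (comb4 1 0 w3 w4) (comb4 0 1 g3 g4) = 0.
Proof.
set p := comb4 1 0 w3 w4.
have p_nz : p != 0 by apply/eqP => /comb4_eq0[/eqP]; rewrite oner_eq0.
have pt_p : is_point <<p>>%MS by rewrite /is_point genmxE rank_rV p_nz.
have pX : (<<p>> <= X)%MS by rewrite genmxE comb4_sub.
have [l [[PSl lX] pl _]] := spread_X.2 _ pt_p pX; rewrite genmxE in pl.
have cap0 : (l :&: L2)%MS = 0.
  apply/eqP/rowV0P => y; rewrite sub_capmx => /andP[yl yL2].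
  apply/eqP/negPn/negP => y_nz.
  have /eqmxP eq_l := spread_lines_meet_eq PSl PS2 lX L2X y_nz yl yL2.
  by move: pl; rewrite eq_l => /comb4_sub_L2[/eqP]; rewrite oner_eq0.
have Xl : (X <= l + L2)%MS.
  apply: rank_le_submx; first by rewrite addsmx_sub lX L2X.
  have rank_l : \rank l = 2%N by case: PSl.
  rewrite (mxrank_disjoint_sum cap0) rank_l genmxE rank2.
  by have := mxrank_sum_cap L1 L2; rewrite !genmxE rank1 rank2; lia.
have /sub_addsmxP[[y z] /= b1E] : (b1 <= l + L2)%MS.
  by apply: submx_trans Xl; apply: submx_trans L1X; rewrite genmxE col_mxSr.
have [g3 [g4 zE]] := sub_L2 (submxMl z L2).
exists (- g3), (- g4).
apply: (polar_spread_span n_ge3 no_singular rankH PSl pl); last exact: rank_comb4_unit.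
rewrite (_ : comb4 0 1 _ _ = y *m l) ?submxMl //.
by apply/(addIr (z *m L2)); rewrite -b1E zE /comb4; apply/rowP => j; rewrite !mxE; ring.
Qed.

Section Family.
Variables g3 g4 h3 h4 : F.
Hypothesis line_a2 : H *m polar_col (comb4 1 0 1 0) (comb4 0 1 g3 g4) = 0.
Hypothesis line_b2 : H *m polar_col (comb4 1 0 0 1) (comb4 0 1 h3 h4) = 0.

Definition famx (u s t : F) := comb4 u 0 s t.
Definition famy (u s t : F) := comb4 0 u (s * g3 + t * h3) (s * g4 + t * h4).

Lemma family_polar u s t : H *m polar_col (famx u s t) (famy u s t) = 0.
Proof.
apply/(mul_polar_col_eq0 c H) => z zH.
have onH (x y : V) : H *m polar_col x y = 0 -> cform x y z = 0.
  by move/(mul_polar_col_eq0 c H x y); apply.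
have f12 := onH _ _ polar1; have f34 := onH _ _ polar2.
have e3 := onH _ _ line_a2; rewrite cform_comb4 f12 f34 in e3.
have e4 := onH _ _ line_b2; rewrite cform_comb4 f12 f34 in e4.
have f23E : cform b1 a2 z = g3 * cform a1 a2 z + g4 * cform a1 b2 z.
  by apply/eqP; rewrite -subr_eq0 -oppr_eq0 -e3; apply/eqP; ring.
have f24E : cform b1 b2 z = h3 * cform a1 a2 z + h4 * cform a1 b2 z.
  by apply/eqP; rewrite -subr_eq0 -oppr_eq0 -e4; apply/eqP; ring.
by rewrite cform_comb4 f12 f34 f23E f24E; ring.
Qed.

Definition family_quad (z : V) :=
  quad3 (cform a1 b1 z) (g3 * cform a1 a2 z + g4 * cform a1 b2 z - cform b1 a2 z)
    (h3 * cform a1 a2 z + h4 * cform a1 b2 z - cform b1 b2 z)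
    (g4 * cform a2 b2 z) ((h4 - g3) * cform a2 b2 z) (- h3 * cform a2 b2 z).

Lemma cform_family u s t z : cform (famx u s t) (famy u s t) z = family_quad z u s t.
Proof. by rewrite cform_comb4 /family_quad /quad3; ring. Qed.

(* A dependent pair forces [u = 0]; then [k1 a1 + k2 b1] lies both on [L1] and on
   the spread line spanned by the member with [u = 1], which is thus [L1]. *)
Lemma family_polar_col_eq0 u s t :
  polar_col (famx u s t) (famy u s t) = 0 -> [&& u == 0, s == 0 & t == 0].
Proof.
move=> pc0.
have [r2 | /span2_dep[k1 [k2 [k_nz]]]] := eqVneq (\rank (col_mx (famx u s t) (famy u s t))) 2%N.
  by move: (polar_col_neq0 no_singular r2); rewrite pc0 eqxx.
rewrite comb4_lin !mulr0 addr0 add0r => /comb4_eq0[k1u k2u e3 e4].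
have u0 : u = 0.
  apply/eqP; apply: contraTT k_nz => u_nz.
  have k10 : k1 = 0 by apply: (mulIf u_nz); rewrite mul0r.
  have k20 : k2 = 0 by apply: (mulIf u_nz); rewrite mul0r.
  by rewrite k10 k20 eqxx.
have PSG : PS <<col_mx (famx 1 s t) (famy 1 s t)>>%MS.
  exact/(polar_spreadP n_ge3 no_singular rankH (rank_comb4_unit _ _ _ _))/family_polar.
have GX : (<<col_mx (famx 1 s t) (famy 1 s t)>> <= X)%MS.
  by rewrite genmxE col_mx_sub !comb4_sub.
have qE : k1 *: famx 1 s t + k2 *: famy 1 s t = comb4 k1 k2 0 0.
  by rewrite comb4_lin e3 e4 !mulr0 !mulr1 addr0 add0r.
have q_nz : comb4 k1 k2 0 0 != 0.
  by apply/eqP => /comb4_eq0[k10 k20 _ _]; rewrite k10 k20 eqxx in k_nz.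
have qG : (comb4 k1 k2 0 0 <= <<col_mx (famx 1 s t) (famy 1 s t)>>)%MS.
  by rewrite -qE genmxE; apply/sub_span2P; do 2!eexists.
have qL1 : (comb4 k1 k2 0 0 <= L1)%MS.
  by rewrite genmxE; apply/sub_span2P; exists k1, k2; rewrite /comb4 !scale0r !addr0.
have /eqmxP eqG := spread_lines_meet_eq PSG PS1 GX L1X q_nz qG qL1.
have /comb4_sub_L1[-> ->] : (famx 1 s t <= L1)%MS by rewrite -eqG genmxE col_mxSl.
by rewrite u0 eqxx.
Qed.

End Family.

Lemma two_spread_lines_contra : quad_closed F \/ finite_field F -> False.
Proof.
move=> closed_or_finite.
have [g3 [g4 line_a2]] := spread_line_through 1 0.
have [h3 [h4 line_b2]] := spread_line_through 0 1.
have [|e _ eH] := exists_rV_notin (A := 1%:M : 'M[F]_n.+1) (B := H).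
  by rewrite mxrank1 rankH.
have [u [s [t [ust_nz ust0]]]] : exists u s t,
    nonzero3 u s t /\ family_quad g3 g4 h3 h4 e u s t = 0.
  exact: quad3_isotropic.
apply: (negP ust_nz); apply: (family_polar_col_eq0 line_a2 line_b2).
apply: (full_annihilator_eq0 (x := e) _ (family_polar line_a2 line_b2 u s t)).
  by rewrite rank_col_mx_notin ?rankH.
by apply/rowP=> j; rewrite (ord1 j) [RHS]mxE -cform_polar_col cform_family.
Qed.

End TwoSpreadLines.

Lemma polar_spread_not_geometric :
  quad_closed F \/ finite_field F -> ~ geometric (polar_spread c H).
Proof.
move=> closed_or_finite geo.
have /rowV0Pn[a1 a1H a1_nz] : H != 0 by rewrite -mxrank_eq0 rankH -lt0n ltnW // ltnW.
have [b1 [rank1 polar1]] := exists_polar_line a1_nz a1H.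
have [|a2 a2H a2_notin] := exists_rV_notin (A := H) (B := col_mx a1 b1).
  by rewrite rankH rank1.
have a2_nz : a2 != 0 by apply: contraNneq a2_notin => ->; rewrite sub0mx.
have [b2 [rank2 polar2]] := exists_polar_line a2_nz a2H.
have L1_neq_L2 : ~~ (<<col_mx a1 b1>> == <<col_mx a2 b2>>)%MS.
  apply: contra a2_notin => /andP[_ sub21].
  have := submx_trans (_ : (a2 <= <<col_mx a2 b2>>)%MS) sub21.
  by rewrite !genmxE col_mxSl => /(_ isT).
apply: (two_spread_lines_contra rank1 rank2 polar1 polar2 L1_neq_L2 _ closed_or_finite).
by apply: geo; rewrite // (polar_spreadP n_ge3 no_singular rankH).
Qed.

End NotGeometric.

Unset Implicit Arguments. Set Strict Implicit.

Theorem proposition6p6 (F : fieldType) (n : nat) (c : {ffun tidx n -> F})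
    (H : 'M[F]_n.+1) :
  (3 <= n)%N -> c != 0 ->
  (forall L : 'M[F]_n.+1, is_line L -> ~ singular_line c L) ->
  is_hyperplane H ->
  (exists R : 'M[F]_#|{: pidx n}|,
     \rank R = (Mdim n - n).+1 /\
     forall u v : 'rV[F]_n.+1, \rank (col_mx u v) = 2%N ->
       (polar_spread c H (<<col_mx u v>>)%MS <-> (plk u v <= R)%MS)) /\
  (quad_closed F \/ finite_field F -> ~ geometric (polar_spread c H)).
Proof.
(* [c != 0] is implied by the absence of singular lines. *)
move=> n_ge3 _ no_singular rankH; split.
  exact: polar_spread_linear.
exact: polar_spread_not_geometric.
Qed.
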